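(* Every abelian group equipped with its Bohr topology is hereditarily $g$-reversible.
   Context: All topological groups are assumed Hausdorff. A topological group $G$ is called $g$-reversible if every continuous automorphism of $G$ (i.e. every continuous group isomorphism of $G$ onto itself) is an open map. A topological group is hereditarily $g$-reversible if every subgroup of it is $g$-reversible in the subspace topology. The Bohr topology of an abelian group $G$ is the coarsest topology on $G$ making all homomorphisms $G\to\mathbb{T}=\mathbb{R}/\mathbb{Z}$ continuous; it is the strongest precompact group topology on $G$. *)

From HB Require Import structures.
From mathcomp Require Import all_boot all_algebra.
From Stdlib Require Import Reals ZArith.

Set Implicit Arguments.
Unset Strict Implicit.
Unset Printing Implicit Defensive.

Definition is_topology (X : Type) (O : (X -> Prop) -> Prop) : Prop :=
  O (fun _ => True) /\
  (forall U V, O U -> O V -> O (fun x => U x /\ V x)) /\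
  (forall F : (X -> Prop) -> Prop,
      (forall U, F U -> O U) -> O (fun x => exists U, F U /\ U x)).

Definition generated_topology (X : Type) (S : (X -> Prop) -> Prop)
  (U : X -> Prop) : Prop :=
  forall O, is_topology O -> (forall V, S V -> O V) -> O U.

(* A homomorphism G -> R/Z is represented by a lift chi : G -> R with
   chi(x+y) - chi(x) - chi(y) an integer for all x, y.  Every homomorphism
   G -> R/Z has such a lift (compose with a set-theoretic section of R -> R/Z),
   and every such lift induces one. *)
Definition circle_hom (G : zmodType) (chi : G -> R) : Prop :=
  forall x y : G, exists k : Z,
    chi (GRing.add x y) = Rplus (Rplus (chi x) (chi y)) (IZR k).

(* Open subsets of R/Z, pulled back to R: open 1-periodic subsets of R. *)
Definition circle_open (U : R -> Prop) : Prop :=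
  open_set U /\ forall t : R, U t <-> U (Rplus t 1).

Definition bohr_subbasis (G : zmodType) (A : G -> Prop) : Prop :=
  exists (chi : G -> R) (U : R -> Prop),
    circle_hom chi /\ circle_open U /\ A = (fun x => U (chi x)).

Definition bohr_open (G : zmodType) : (G -> Prop) -> Prop :=
  generated_topology (@bohr_subbasis G).

Definition is_subgroup (G : zmodType) (H : G -> Prop) : Prop :=
  H (GRing.zero : G) /\
  (forall x y : G, H x -> H y -> H (GRing.add x (GRing.opp y))).

Definition subspace_open (G : zmodType) (O : (G -> Prop) -> Prop)
  (H : G -> Prop) (W : {x : G | H x} -> Prop) : Prop :=
  exists V, O V /\ forall h : {x : G | H x}, W h <-> V (proj1_sig h).

Definition sub_additive (G : zmodType) (H : G -> Prop)
  (f : {x : G | H x} -> {x : G | H x}) : Prop :=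
  forall h1 h2 h3 : {x : G | H x},
    proj1_sig h3 = GRing.add (proj1_sig h1) (proj1_sig h2) ->
    proj1_sig (f h3) = GRing.add (proj1_sig (f h1)) (proj1_sig (f h2)).

Definition g_reversible_subgroup (G : zmodType) (O : (G -> Prop) -> Prop)
  (H : G -> Prop) : Prop :=
  forall f : {x : G | H x} -> {x : G | H x},
    sub_additive f ->
    bijective f ->
    (forall W, subspace_open O W -> subspace_open O (fun h => W (f h))) ->
    forall W, subspace_open O W ->
      subspace_open O (fun y => exists h, W h /\ f h = y).

Definition hereditarily_g_reversible (G : zmodType) (O : (G -> Prop) -> Prop)
  : Prop :=
  forall H : G -> Prop, is_subgroup H -> g_reversible_subgroup O H.

(* Characters of a subgroup H of an abelian group G extend to G because R/Z is
   divisible: adjoin one element at a time and conclude with Zorn's lemma.  Hence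
   the topology induced on H by the Bohr topology of G is generated by the
   characters of H, i.e. it is the Bohr topology of H, which depends only on the
   group structure of H.  Every automorphism of H therefore pulls open sets back
   to open sets; applied to the inverse of an automorphism this says that the
   automorphism is open, without using its continuity. *)

From mathcomp Require Import all_boot all_algebra zify.
From Stdlib Require Import Reals ZArith Lra.
From Stdlib Require Import ClassicalEpsilon ProofIrrelevance Classical.
From mathcomp Require boolp classical_sets.
Import GRing.Theory.
Set Implicit Arguments.
Unset Strict Implicit.
Local Open Scope ring_scope.

Definition intR (n : int) : R := IZR (ssrZ.Z_of_int n).

Lemma intRD m n : intR (m + n) = (intR m + intR n)%R.
Proof. by rewrite /intR -plus_IZR; f_equal; lia. Qed.
Lemma intRM m n : intR (m * n) = (intR m * intR n)%R.
Proof. by rewrite /intR -mult_IZR; f_equal; lia. Qed.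
Lemma intRN n : intR (- n) = (- intR n)%R.
Proof. by rewrite /intR -opp_IZR; f_equal; lia. Qed.

(** Equality in the circle [R/Z], read on representatives in [R]. *)
Definition congrZ (a b : R) : Prop := exists k : Z, a = (b + IZR k)%R.

Section CongruenceModZ.
Local Open Scope R_scope.

Lemma congrZ_refl a : congrZ a a. Proof. by exists 0%Z; rewrite Rplus_0_r. Qed.
Lemma eq_congrZ a b : a = b -> congrZ a b. Proof. by move=> ->; apply: congrZ_refl. Qed.
Lemma congrZ_sym a b : congrZ a b -> congrZ b a.
Proof. by move=> [k ->]; exists (- k)%Z; rewrite opp_IZR; ring. Qed.
Lemma congrZ_trans a b c : congrZ a b -> congrZ b c -> congrZ a c.
Proof. by move=> [k ->] [l ->]; exists (l + k)%Z; rewrite plus_IZR; ring. Qed.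
Lemma congrZD a b c d : congrZ a b -> congrZ c d -> congrZ (a + c) (b + d).
Proof. by move=> [k ->] [l ->]; exists (k + l)%Z; rewrite plus_IZR; ring. Qed.
Lemma congrZN a b : congrZ a b -> congrZ (- a) (- b).
Proof. by move=> [k ->]; exists (- k)%Z; rewrite opp_IZR; ring. Qed.
Lemma congrZ_addr_self a : congrZ a (a + a) -> congrZ a 0.
Proof. by move=> [k E]; exists (- k)%Z; rewrite opp_IZR; lra. Qed.
Lemma congrZ_addr0 a b : congrZ (a + b) 0 -> congrZ b (- a).
Proof. by move=> [k E]; exists k; lra. Qed.

Lemma periodic_congrZ (U : R -> Prop) : (forall t, U t <-> U (t + 1)) ->
  forall a b, congrZ a b -> (U a <-> U b).
Proof.
move=> U1 a b [k ->]; symmetry; elim/Z.peano_ind: k b => [|k IHk|k IHk] b.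
- by rewrite Rplus_0_r.
- by rewrite succ_IZR -Rplus_assoc -U1.
- by rewrite (U1 (b + IZR (Z.pred k))) Rplus_assoc -succ_IZR Z.succ_pred.
Qed.
End CongruenceModZ.

Section Subgroups.
Variables (G : zmodType) (K : G -> Prop).
Hypothesis sK : is_subgroup K.

Lemma subgroup0 : K 0. Proof. by case: sK. Qed.
Lemma subgroupB x y : K x -> K y -> K (x - y). Proof. by case: sK => _; apply. Qed.
Lemma subgroupN x : K x -> K (- x).
Proof. by move=> Kx; rewrite -sub0r; apply: subgroupB => //; apply: subgroup0. Qed.
Lemma subgroupD x y : K x -> K y -> K (x + y).
Proof. by move=> Kx Ky; rewrite -(opprK y); apply/subgroupB/subgroupN. Qed.
Lemma subgroupMn x k : K x -> K (x *+ k).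
Proof.
move=> Kx; elim: k => [|k IHk]; first by rewrite mulr0n; apply: subgroup0.
by rewrite mulrS; apply: subgroupD.
Qed.
Lemma subgroupMz x n : K x -> K (x *~ n).
Proof.
move=> Kx; case: n => k; first exact: subgroupMn.
by rewrite NegzE mulrNz; apply/subgroupN/subgroupMn.
Qed.
End Subgroups.

Definition char_on (G : zmodType) (K : G -> Prop) (psi : G -> R) : Prop :=
  forall x y, K x -> K y -> congrZ (psi (x + y)) (psi x + psi y)%R.

Section Characters.
Variables (G : zmodType) (K : G -> Prop) (psi : G -> R).
Hypotheses (sK : is_subgroup K) (hK : char_on K psi).

Lemma char_on0 : congrZ (psi 0) 0%R.
Proof.
by apply: congrZ_addr_self; have := hK (subgroup0 sK) (subgroup0 sK); rewrite addr0.
Qed.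

Lemma char_onN x : K x -> congrZ (psi (- x)) (- psi x)%R.
Proof.
move=> Kx; apply/congrZ_addr0/(congrZ_trans _ char_on0)/congrZ_sym.
by have := hK Kx (subgroupN sK Kx); rewrite subrr.
Qed.

Lemma char_onMn x k : K x -> congrZ (psi (x *+ k)) (intR k * psi x)%R.
Proof.
move=> Kx; elim: k => [|k IHk].
  by rewrite mulr0n Rmult_0_l; apply: char_on0.
rewrite mulrS -addn1 PoszD intRD; apply: congrZ_trans (hK Kx (subgroupMn sK k Kx)) _.
rewrite Rplus_comm Rmult_plus_distr_r Rmult_1_l.
exact: congrZD IHk (congrZ_refl _).
Qed.

Lemma char_onMz x n : K x -> congrZ (psi (x *~ n)) (intR n * psi x)%R.
Proof.
move=> Kx; case: n => k; first exact: char_onMn.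
rewrite NegzE mulrNz intRN -Ropp_mult_distr_l.
exact: congrZ_trans (char_onN (subgroupMn sK _ Kx)) (congrZN (char_onMn _ Kx)).
Qed.
End Characters.

Section AdjoinElement.
Variables (G : zmodType) (K : G -> Prop) (psi : G -> R) (x : G).
Hypotheses (sK : is_subgroup K) (hK : char_on K psi).

Lemma subgroup_multiples_dvdz : exists m : nat, forall n, K (x *~ n) <-> n \in dvdz m.
Proof.
have [[k [k_gt0 Kk]]|no_pos] := classic (exists k : nat, (0 < k)%nat /\ K (x *~ k)).
- pose P k := (0 < k)%nat && boolp.asbool (K (x *~ k)).
  have [|m /andP[m_gt0 /boolp.asboolP Km] m_min] := ex_minnP (ex_intro P k _).
    by rewrite /P k_gt0; apply/boolp.asboolP.
  exists m => n; split => [Kn|/dvdzP[q ->]]; last first.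
    by rewrite mulrC mulrzA; apply: subgroupMz.
  have m_neq0 : Posz m != 0 by rewrite eqz_nat -lt0n.
  have Kr : K (x *~ modz n m).
    rewrite /modz mulrzBr.
    by apply: subgroupB => //; rewrite mulrC mulrzA; apply: subgroupMz.
  apply/dvdz_mod0P; move: (modz_ge0 n m_neq0) (ltz_mod n m_neq0) Kr.
  case: (modz n m) => [[|r]|r] //= _ r_lt Kr.
  have := m_min r.+1; rewrite /P /= => /(_ (introT (boolp.asboolP _) Kr)).
  by move: r_lt; rewrite /Num.norm /=; lia.
- exists 0%nat => n; rewrite dvd0z; split => [|/eqP ->]; last exact: subgroup0.
  case: n => [[|k]|k] // Kn; case: no_pos; exists k.+1; split => //.
  by have := subgroupN sK Kn; rewrite NegzE mulrNz opprK.
Qed.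

Lemma char_on_multiples :
  exists t : R, forall n, K (x *~ n) -> congrZ (psi (x *~ n)) (intR n * t)%R.
Proof.
have [[|m] Hm] := subgroup_multiples_dvdz.
  exists 0%R => n /Hm; rewrite dvd0z => /eqP ->.
  by rewrite mulr0z Rmult_0_r; apply: (char_on0 sK hK).
have Km : K (x *~ m.+1) by apply/Hm/dvdzz.
have m_neq0 : intR m.+1 <> 0%R by rewrite /intR; apply: not_0_IZR; lia.
exists (psi (x *~ m.+1) / intR m.+1)%R => n /Hm /dvdzP[q ->].
rewrite mulrC mulrzA intRM; apply: congrZ_trans (char_onMz sK hK q Km) _.
by apply: eq_congrZ; field.
Qed.
End AdjoinElement.

Definition char_extends (G : zmodType) (K : G -> Prop) (psi : G -> R)
    (K' : G -> Prop) (psi' : G -> R) : Prop :=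
  (forall y, K y -> K' y) /\ (forall y, K y -> congrZ (psi' y) (psi y)).

Lemma char_extends_refl (G : zmodType) (K : G -> Prop) psi : char_extends K psi K psi.
Proof. by split=> // y _; apply: congrZ_refl. Qed.

Lemma char_extends_trans (G : zmodType) (K1 K2 K3 : G -> Prop) psi1 psi2 psi3 :
  char_extends K1 psi1 K2 psi2 -> char_extends K2 psi2 K3 psi3 ->
  char_extends K1 psi1 K3 psi3.
Proof.
move=> [sub12 e12] [sub23 e23]; split=> y Ky; first exact/sub23/sub12.
exact: congrZ_trans (e23 _ (sub12 _ Ky)) (e12 _ Ky).
Qed.

Section AdjoinCharacter.
Variables (G : zmodType) (K : G -> Prop) (psi : G -> R) (x : G) (t : R).
Hypotheses (sK : is_subgroup K) (hK : char_on K psi).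
Hypothesis psi_multiples : forall n, K (x *~ n) -> congrZ (psi (x *~ n)) (intR n * t)%R.

Definition adjoin_rep (y : G) (kn : G * int) : Prop := K kn.1 /\ y = kn.1 + x *~ kn.2.
Definition adjoin (y : G) : Prop := exists kn, adjoin_rep y kn.
(* On [k + x *~ n] the extension takes the value [psi k + n t] for some chosen
   decomposition; [adjoin_charE] shows the choice does not matter modulo [Z]. *)
Definition adjoin_char (y : G) : R :=
  let kn := epsilon (inhabits (0, 0)) (adjoin_rep y) in (psi kn.1 + intR kn.2 * t)%R.

Lemma adjoin_charE y k n :
  adjoin_rep y (k, n) -> congrZ (adjoin_char y) (psi k + intR n * t)%R.
Proof.
move=> rep; rewrite /adjoin_char.
case: (epsilon_spec (inhabits (0, 0)) _ (ex_intro _ _ rep)) => /=.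
set k' := _.1; set n' := _.2 => Kk' y_eq; case: rep => /= Kk y_eq'.
have dk : k' - k = x *~ (n - n').
  by rewrite mulrzBr -[k'](addrK (x *~ n')) -y_eq y_eq' addrAC (addrC k) addrK.
have Kd : K (x *~ (n - n')) by rewrite -dk; apply: subgroupB.
have psi_k' : congrZ (psi k') (psi k + intR (n - n') * t)%R.
  have := hK Kk Kd; rewrite -{1}dk addrC subrK => /congrZ_trans; apply.
  exact: congrZD (congrZ_refl _) (psi_multiples Kd).
apply: congrZ_trans (congrZD psi_k' (congrZ_refl _)) _.
by apply: eq_congrZ; rewrite intRD intRN; ring.
Qed.

Lemma adjoin_subgroup : is_subgroup adjoin.
Proof.
split; first by exists (0, 0); split; [apply: subgroup0 | rewrite /= addr0].
move=> _ _ [[k1 n1] [/= Kk1 ->]] [[k2 n2] [/= Kk2 ->]].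
exists (k1 - k2, n1 - n2); split; first exact: subgroupB.
by rewrite /= mulrzBr opprD addrACA.
Qed.

Lemma adjoin_mem : adjoin x.
Proof. by exists (0, 1); split; [apply: subgroup0 | rewrite /= add0r]. Qed.

Lemma adjoin_char_extends : char_extends K psi adjoin adjoin_char.
Proof.
have rep_y y : K y -> adjoin_rep y (y, 0) by move=> Ky; split; rewrite //= mulr0z addr0.
split=> y Ky; first by exists (y, 0); apply: rep_y.
apply: congrZ_trans (adjoin_charE (rep_y y Ky)) _.
by apply: eq_congrZ; rewrite Rmult_0_l Rplus_0_r.
Qed.

Lemma adjoin_char_on : char_on adjoin adjoin_char.
Proof.
move=> y z [[k1 n1] rep1] [[k2 n2] rep2].
have rep3 : adjoin_rep (y + z) (k1 + k2, n1 + n2).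
  case: rep1 rep2 => /= Kk1 -> [/= Kk2 ->].
  by split; [apply: subgroupD | rewrite /= mulrzDr addrACA].
apply: congrZ_trans (adjoin_charE rep3) _.
apply: congrZ_trans (congrZD (hK rep1.1 rep2.1) (congrZ_refl _)) _.
apply/congrZ_sym/(congrZ_trans (congrZD (adjoin_charE rep1) (adjoin_charE rep2))).
by apply: eq_congrZ; rewrite /= intRD; ring.
Qed.
End AdjoinCharacter.

Lemma char_on_adjoin (G : zmodType) (K : G -> Prop) (psi : G -> R) (x : G) :
  is_subgroup K -> char_on K psi ->
  exists K' psi', [/\ is_subgroup K', char_on K' psi', K' x & char_extends K psi K' psi'].
Proof.
move=> sK hK; have [t psi_multiples] := char_on_multiples x sK hK.
exists (adjoin K x), (adjoin_char K psi x t); split.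
- exact: adjoin_subgroup.
- exact: adjoin_char_on.
- exact: adjoin_mem.
- exact: adjoin_char_extends.
Qed.

Section CharacterExtension.
Variables (G : zmodType) (H : G -> Prop) (c : G -> R).
Hypotheses (sH : is_subgroup H) (hH : char_on H c).

Definition extension_of_c (p : (G -> Prop) * (G -> R)) : Prop :=
  [/\ is_subgroup p.1, char_on p.1 p.2 & char_extends H c p.1 p.2].

Definition extension := {p | extension_of_c p}.

Lemma extensionP (s : extension) :
  [/\ is_subgroup (sval s).1, char_on (sval s).1 (sval s).2
    & char_extends H c (sval s).1 (sval s).2].
Proof. exact: svalP s. Qed.

Definition extension_le (s u : extension) : Prop :=
  char_extends (sval s).1 (sval s).2 (sval u).1 (sval u).2.

Definition trivial_extension : extension.
Proof. by exists (H, c); split => //; apply: char_extends_refl. Defined.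

Section ChainUnion.
Variable A : extension -> Prop.
Hypothesis A_chain : forall s u, A s -> A u -> extension_le s u \/ extension_le u s.
Variables (s0 : extension) (A_s0 : A s0).

Definition union_subgroup (y : G) : Prop := exists s, A s /\ (sval s).1 y.
Definition union_char (y : G) : R :=
  (sval (epsilon (inhabits s0) (fun s => A s /\ (sval s).1 y))).2 y.

Lemma union_charE s y : A s -> (sval s).1 y -> congrZ (union_char y) ((sval s).2 y).
Proof.
move=> As Ky; rewrite /union_char.
case: (epsilon_spec (inhabits s0) (fun u => A u /\ (sval u).1 y)
  (ex_intro _ s (conj As Ky))).
move: (epsilon _ _) => u Au Ku.
by case: (A_chain As Au) => [[_ e]|[_ e]]; [apply: e | apply/congrZ_sym/e].
Qed.

Lemma union_common s1 s2 y1 y2 : A s1 -> A s2 -> (sval s1).1 y1 -> (sval s2).1 y2 ->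
  exists s, [/\ A s, (sval s).1 y1 & (sval s).1 y2].
Proof.
move=> As1 As2 Ky1 Ky2.
by case: (A_chain As1 As2) => [[sub _]|[sub _]]; [exists s2 | exists s1]; split; auto.
Qed.

Lemma union_extension_of_c : extension_of_c (union_subgroup, union_char).
Proof.
split => /=.
- split; first by exists s0; split=> //; apply: subgroup0; case: (extensionP s0).
  move=> y1 y2 [s1 [As1 Ky1]] [s2 [As2 Ky2]].
  have [s [As Ky1' Ky2']] := union_common As1 As2 Ky1 Ky2.
  by exists s; split=> //; case: (extensionP s) => sK _ _; apply: subgroupB.
- move=> y1 y2 [s1 [As1 Ky1]] [s2 [As2 Ky2]].
  have [s [As Ky1' Ky2']] := union_common As1 As2 Ky1 Ky2.
  have [sK hK _] := extensionP s.
  apply: congrZ_trans (union_charE As (subgroupD sK Ky1' Ky2')) _.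
  apply: congrZ_trans (hK _ _ Ky1' Ky2') _.
  by apply/congrZ_sym/congrZD; apply: union_charE.
- have [_ _ [sub e]] := extensionP s0.
  split=> y Hy; first by exists s0; split; last exact: sub.
  exact: congrZ_trans (union_charE A_s0 (sub _ Hy)) (e _ Hy).
Qed.

Lemma union_upper_bound s : A s ->
  extension_le s (exist _ (union_subgroup, union_char) union_extension_of_c).
Proof. by move=> As; split=> y Ky /=; [exists s | apply: union_charE]. Qed.
End ChainUnion.

Theorem character_extension :
  exists psi : G -> R, circle_hom psi /\ forall y, H y -> congrZ (psi y) (c y).
Proof.
pose le s u := boolp.asbool (extension_le s u).
have le_refl s : le s s by apply/boolp.asboolP/char_extends_refl.
have le_trans r s u : le r s -> le s u -> le r u.
  move=> /boolp.asboolP rs /boolp.asboolP su.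
  exact/boolp.asboolP/(char_extends_trans rs su).
have chain_bound A : classical_sets.total_on A le -> exists u, forall s, A s -> le s u.
  move=> A_tot; have [[s0 A_s0]|A0] := classic (exists s, A s); last first.
    by exists trivial_extension => s As; case: A0; exists s.
  have A_chain s u : A s -> A u -> extension_le s u \/ extension_le u s.
    by move=> As Au; case: (A_tot s u As Au) => /boolp.asboolP; auto.
  exists (exist _ _ (union_extension_of_c A_chain A_s0)) => s As.
  exact/boolp.asboolP/union_upper_bound.
have [m m_max] := classical_sets.ZL_preorder trivial_extension le_refl le_trans chain_bound.
have [sK hK eK] := extensionP m.
have K_full y : (sval m).1 y.
  have [K' [psi' [sK' hK' K'y ext']]] := char_on_adjoin y sK hK.
  pose m' : extension := exist _ (K', psi') (And3 sK' hK' (char_extends_trans eK ext')).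
  by have /boolp.asboolP[sub _] := m_max m' (boolp.asboolT ext'); apply: sub.
exists (sval m).2; split; last exact: eK.2.
by move=> y z; apply: hK (K_full y) (K_full z).
Qed.
End CharacterExtension.

Section Topology.
Variable X : Type.

Lemma preimage_topology (Y : Type) (O : (Y -> Prop) -> Prop) (p : Y -> X) :
  is_topology O -> is_topology (fun V => O (fun y => V (p y))).
Proof.
move=> [top [inter union]]; split; [|split] => //.
- by move=> U V; apply: inter.
move=> F oF; pose F' W := exists2 U, F U & W = (fun y => U (p y)).
have -> : (fun y => exists U, F U /\ U (p y)) = (fun y => exists W, F' W /\ W y).
  apply: boolp.funext => y; apply: boolp.propext; split.
    by move=> [U [FU Upy]]; exists (fun y => U (p y)); split; first exists U.
  by move=> [_ [[U FU ->] Upy]]; exists U.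
by apply: union => _ [U /oF oU ->].
Qed.

Section GeneratedTopology.
Variable S : (X -> Prop) -> Prop.

Lemma generated_topology_subbasis V : S V -> generated_topology S V.
Proof. by move=> SV O _; apply. Qed.

Lemma generated_topology_is_topology : is_topology (generated_topology S).
Proof.
split; [|split].
- by move=> O [].
- move=> U V oU oV O tO hS; case: (tO) => _ [inter _].
  by apply: inter; [apply: oU | apply: oV].
- by move=> F oF O tO hS; case: (tO) => _ [_ union]; apply: union => U /oF; apply.
Qed.

Lemma generated_topology_preimage (Y : Type) (O : (Y -> Prop) -> Prop) (p : Y -> X) :
  is_topology O -> (forall V, S V -> O (fun y => V (p y))) ->
  forall V, generated_topology S V -> O (fun y => V (p y)).
Proof. by move=> tO hS V oV; apply: oV (preimage_topology p tO) hS. Qed.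
End GeneratedTopology.
End Topology.

Lemma subspace_topology (G : zmodType) (O : (G -> Prop) -> Prop) (H : G -> Prop) :
  is_topology O -> is_topology (@subspace_open G O H).
Proof.
move=> [top [inter union]]; split; [|split].
- by exists (fun _ => True).
- move=> U1 U2 [V1 [oV1 e1]] [V2 [oV2 e2]]; exists (fun x => V1 x /\ V2 x).
  by split=> [|h]; [apply: inter | rewrite e1 e2].
move=> F oF.
pose F' V := O V /\ exists2 W, F W & forall h : {x | H x}, W h <-> V (sval h).
exists (fun x => exists V, F' V /\ V x); split; first by apply: union => V [].
move=> h; split=> [[W [FW Wh]]|[V [[_ [W FW e]] Vh]]]; last by exists W; rewrite e.
have [V [oV e]] := oF W FW.
by exists V; split; [split=> //; exists W | rewrite -e].
Qed.

Section SubgroupAutomorphisms.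
Variables (G : zmodType) (H : G -> Prop).
Hypothesis sH : is_subgroup H.

Lemma sub_additive_inverse (f g : {x | H x} -> {x | H x}) :
  sub_additive f -> cancel f g -> cancel g f -> sub_additive g.
Proof.
move=> addf fK gK h1 h2 h3 h3_eq.
pose s : {x | H x} := exist _ _ (subgroupD sH (svalP (g h1)) (svalP (g h2))).
suff -> : h3 = f s by rewrite fK.
apply: eq_sig_hprop => [x|]; first exact: proof_irrelevance.
by rewrite h3_eq (addf (g h1) (g h2) s) // !gK.
Qed.

Lemma sub_character_extension (chi : {x | H x} -> R) :
  (forall h1 h2 h3, sval h3 = sval h1 + sval h2 -> congrZ (chi h3) (chi h1 + chi h2)%R) ->
  exists psi, circle_hom psi /\ forall h, congrZ (psi (sval h)) (chi h).
Proof.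
move=> hchi.
pose c x :=
  if excluded_middle_informative (H x) is left Hx then chi (exist _ x Hx) else 0%R.
have cE h : c (sval h) = chi h.
  case: h => x Hx; rewrite /c /=; case: excluded_middle_informative => [Hx'|] //.
  by rewrite (proof_irrelevance _ Hx' Hx).
have hc : char_on H c.
  move=> x y Hx Hy.
  have := hchi (exist _ x Hx) (exist _ y Hy) (exist _ _ (subgroupD sH Hx Hy)) erefl.
  by rewrite -!cE.
have [psi [hpsi psi_c]] := character_extension sH hc.
by exists psi; split=> // h; rewrite -cE; apply/psi_c/svalP.
Qed.

Lemma bohr_subbasis_subspace_open (g : {x | H x} -> {x | H x}) V :
  sub_additive g -> bohr_subbasis V ->
  @subspace_open G (@bohr_open G) H (fun h => V (sval (g h))).
Proof.
move=> addg [chi [U [hchi [oU ->]]]].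
have [|psi [hpsi psi_chi]] := @sub_character_extension (fun h => chi (sval (g h))).
  by move=> h1 h2 h3 /addg ->; apply: hchi.
exists (fun x => U (psi x)); split.
  by apply: generated_topology_subbasis; exists psi, U.
by move=> h; apply: periodic_congrZ oU.2 _ _ (congrZ_sym (psi_chi h)).
Qed.
End SubgroupAutomorphisms.

Theorem proposition7p5 (G : zmodType) :
  @hereditarily_g_reversible G (@bohr_open G).
Proof.
move=> H sH f addf [g fK gK] _ W [V [oV W_V]].
have addg := sub_additive_inverse sH addf fK gK.
have [V' [oV' e]] : @subspace_open G (@bohr_open G) H (fun y => V (sval (g y))).
  apply: (generated_topology_preimage (p := fun y => sval (g y))) oV.
    exact/subspace_topology/generated_topology_is_topology.
  by move=> U; apply: bohr_subbasis_subspace_open.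
exists V'; split=> // y; rewrite -e; split=> [[h [Wh <-]]|Vgy].
  by rewrite fK; apply/W_V.
by exists (g y); rewrite gK; split=> //; apply/W_V.
Qed.
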